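(* For every $\varepsilon>0$ and positive integer $m$ there is $p_0(\varepsilon,m)$ such that for every prime $p\ge p_0(\varepsilon,m)$ there exists a Euclidean sub-$p$-toral set $B=\{b_1,\dots,b_m\}$ (in some Euclidean space) with $\bigl|\,|b_i-b_j|-|i-j|\,\bigr|<\varepsilon$ for all $i,j$.
   Context: A $p$-torus is a group isomorphic to $(\mathbb{Z}_p)^\alpha$ for some $\alpha\ge1$. A set $X\subset\mathbb{R}^k$ is Euclidean sub-$p$-toral if there exist $n\ge k$, a $p$-torus $G$ and an action of $G$ on $\mathbb{R}^n$ by isometries such that $X$ (viewed in $\mathbb{R}^n$ via the standard inclusion $\mathbb{R}^k\subset\mathbb{R}^n$) is contained in a single $G$-orbit. *)

From HB Require Import structures.
From mathcomp Require Import all_boot all_order all_algebra.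
From mathcomp Require Import reals.
Set Implicit Arguments. Unset Strict Implicit. Unset Printing Implicit Defensive.
Import Order.TTheory GRing.Theory Num.Theory.
Local Open Scope ring_scope.

Definition edist (R : realType) (n : nat) (x y : 'rV[R]_n) : R :=
  Num.sqrt (\sum_(i < n) (x 0 i - y 0 i) ^+ 2).

(* act is an action of the p-torus G = ('Z_p)^alpha = 'rV['Z_p]_alpha on R^n
   by isometries (of the Euclidean distance). *)
Definition isometric_torus_action (R : realType) (p alpha n : nat)
    (act : 'rV['Z_p]_alpha -> 'rV[R]_n -> 'rV[R]_n) : Prop :=
  [/\ forall x, act 0 x = x,
      forall g h x, act (g + h) x = act g (act h x)
    & forall g x y, edist (act g x) (act g y) = edist x y].

Definition std_incl (R : realType) (k d : nat) (x : 'rV[R]_k) : 'rV[R]_(k + d) :=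
  row_mx x 0.

Definition euclidean_sub_p_toral (R : realType) (p k : nat) (X : 'rV[R]_k -> Prop) : Prop :=
  exists (d alpha : nat) (act : 'rV['Z_p]_alpha -> 'rV[R]_(k + d) -> 'rV[R]_(k + d))
         (x0 : 'rV[R]_(k + d)),
    [/\ (1 <= alpha)%N, isometric_torus_action act
      & forall x, X x -> exists g, std_incl d x = act g x0].

(* The p-torus Z_p acts isometrically on the plane by rotations through
   multiples of 2 pi / p.  The orbit of a point at distance r = p / (2 pi)
   from the origin is a regular p-gon of circumference about p, and its first
   m vertices b_0, ..., b_(m-1) satisfy
   |b_i - b_j| = 2 r |sin (pi (i - j) / p)| = (p / pi) |sin (pi (i - j) / p)|.
   Since sin h = h + o(h), this is within eps of |i - j| once p is large
   compared to m. *)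
From HB Require Import structures.
From mathcomp Require Import all_boot all_order all_algebra.
From mathcomp Require Import reals.
From mathcomp Require Import topology normedtype derive trigo.
From mathcomp Require Import ring lra.

Set Implicit Arguments.
Unset Strict Implicit.
Unset Printing Implicit Defensive.
Import Order.TTheory GRing.Theory Num.Theory.
Import numFieldNormedType.Exports.
Local Open Scope ring_scope.

Section SineApproximation.
Variable R : realType.

Lemma sin_linear_approx (d : R) : 0 < d ->
  exists2 e : R, 0 < e & forall h, `|h| < e -> `|sin h - h| <= d * `|h|.
Proof.
move=> d_gt0.
have := @derivable_sin R 0.
have Dsin0 : 'D_1 (@sin R) 0 = 1 by rewrite derive_val cos0.
rewrite /derivable -[lim _]/('D_1 (@sin R) 0) Dsin0.
move/cvgrPdist_lt => /(_ d d_gt0); rewrite near_withinE.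
case/nbhs_ballP => e /= e_gt0 He; exists e => // h he.
have [->|h_neq0] := eqVneq h 0; first by rewrite sin0 subr0 normr0 mulr0.
have := He h; rewrite /ball /= sub0r normrN => /(_ he h_neq0).
have -> : h%:A = h by rewrite /GRing.scale /= mulr1.
rewrite addr0 sin0 subr0 => /ltW Hh.
have -> : sin h - h = - (h * (1 - h^-1 * sin h)).
  by rewrite mulrBr mulr1 mulrA mulfV // mul1r opprB.
by rewrite normrN normrM mulrC ler_pM2r ?normr_gt0.
Qed.

Lemma sin_chord_approx (eps M : R) : 0 < eps -> 0 < M ->
  exists2 e : R, 0 < e & forall x y, 0 < x -> x * M <= e -> `|y| < M ->
    `| `|sin (x * y)| / x - `|y| | < eps.
Proof.
move=> eps_gt0 M_gt0.
have [e e_gt0 He] := sin_linear_approx (divr_gt0 eps_gt0 M_gt0).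
exists e => // x y x_gt0 xM yM.
have xy_lt_e : `|x * y| < e.
  by rewrite normrM gtr0_norm //; apply: lt_le_trans xM; rewrite ltr_pM2l.
have y_eq : `|y| = `|x * y| / x by rewrite normrM gtr0_norm // mulrC mulKf ?gt_eqF.
rewrite [in X in `|_ - X|]y_eq -mulrBl normrM normfV (gtr0_norm x_gt0).
rewrite ltr_pdivrMr // (le_lt_trans (ler_dist_dist _ _)) //.
apply: (le_lt_trans (He _ xy_lt_e)).
rewrite normrM (gtr0_norm x_gt0) mulrCA [eps * x]mulrC ltr_pM2l //.
by rewrite mulrAC ltr_pdivrMr // ltr_pM2l.
Qed.

End SineApproximation.

Section PlaneRotations.
Variable R : realType.

Definition mk2 (a b : R) : 'rV[R]_2 := \row_(j < 2) if val j == 0%N then a else b.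

Definition rot2 (t : R) (v : 'rV[R]_2) : 'rV[R]_2 :=
  mk2 (cos t * v 0 ord0 - sin t * v 0 ord_max) (sin t * v 0 ord0 + cos t * v 0 ord_max).

Lemma mk2_0 (a b : R) : mk2 a b 0 ord0 = a.
Proof. by rewrite mxE. Qed.

Lemma mk2_1 (a b : R) : mk2 a b 0 ord_max = b.
Proof. by rewrite mxE. Qed.

Lemma mk2_eta (v : 'rV[R]_2) : v = mk2 (v 0 ord0) (v 0 ord_max).
Proof.
by apply/rowP => -[[|[|j]] Hj]; rewrite mxE //=; congr (v _ _); apply: val_inj.
Qed.

Lemma edist2 (v w : 'rV[R]_2) :
  edist v w = Num.sqrt ((v 0 ord0 - w 0 ord0) ^+ 2 + (v 0 ord_max - w 0 ord_max) ^+ 2).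
Proof.
rewrite /edist !big_ord_recl big_ord0 addr0.
by have -> : lift ord0 (ord0 : 'I_1) = ord_max :> 'I_2 by apply: val_inj.
Qed.

Lemma rot20 (v : 'rV[R]_2) : rot2 0 v = v.
Proof. by rewrite /rot2 cos0 sin0 !mul1r !mul0r subr0 add0r -mk2_eta. Qed.

Lemma rot2D (s t : R) v : rot2 s (rot2 t v) = rot2 (s + t) v.
Proof. by rewrite /rot2 !mk2_0 !mk2_1 cosD sinD; congr mk2; ring. Qed.

Lemma rot2_periodic (t : R) q v : rot2 (t + (pi *+ 2) *+ q) v = rot2 t v.
Proof. by rewrite /rot2 (periodicn (@cosD2pi R)) (periodicn (@sinD2pi R)). Qed.

Lemma edist_rot2 (t : R) v w : edist (rot2 t v) (rot2 t w) = edist v w.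
Proof.
rewrite !edist2 /rot2 !mk2_0 !mk2_1; congr Num.sqrt.
transitivity ((cos t ^+ 2 + sin t ^+ 2) *
  ((v 0 ord0 - w 0 ord0) ^+ 2 + (v 0 ord_max - w 0 ord_max) ^+ 2)); first ring.
by rewrite cos2Dsin2 mul1r.
Qed.

(* With r = 1 / (2 x), the chord between the angles 2 x a and 2 x b has
   length |sin (x (a - b))| / x, which is close to |a - b| for small x. *)
Lemma edist_rot2_chord (x a b : R) : 0 < x ->
  edist (rot2 (2 * x * a) (mk2 (2 * x)^-1 0)) (rot2 (2 * x * b) (mk2 (2 * x)^-1 0))
  = `|sin (x * (a - b))| / x.
Proof.
move=> x_gt0; set y := x * (a - b).
have -> : 2 * x * a = x * (a + b) + y by rewrite /y; ring.
have -> : 2 * x * b = x * (a + b) - y by rewrite /y; ring.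
rewrite edist2 /rot2 !mk2_0 !mk2_1 cosD cosB sinD sinB.
rewrite -[in RHS](gtr0_norm x_gt0) -normfV -normrM -sqrtr_sqr; congr Num.sqrt.
transitivity ((sin y / x) ^+ 2 * (cos (x * (a + b)) ^+ 2 + sin (x * (a + b)) ^+ 2)).
  by field; rewrite gt_eqF.
by rewrite cos2Dsin2 mulr1.
Qed.

End PlaneRotations.

Section RegularPolygon.
Variable R : realType.

(* The vertices of the regular n-gon inscribed in the circle of circumference
   n, i.e. of radius 1 / (2 x) with x = pi / n; the i-th one is at angle 2 x i. *)
Definition polygon_vertex (n i : nat) : 'rV[R]_2 :=
  rot2 (2 * (pi / n%:R) * i%:R) (mk2 (2 * (pi / n%:R))^-1 0).

Lemma edist_polygon_vertex n i j : (0 < n)%N ->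
  edist (polygon_vertex n i) (polygon_vertex n j) =
  `|sin (pi / n%:R * (i%:R - j%:R))| / (pi / n%:R).
Proof. by move=> n_gt0; rewrite edist_rot2_chord // divr_gt0 ?pi_gt0 ?ltr0n. Qed.

Definition Zp_rot (p : nat) (g : 'rV['Z_p]_1) : 'rV[R]_2 -> 'rV[R]_2 :=
  rot2 (2 * (pi / (Zp_trunc p).+2%:R) * (val (g 0 0))%:R).

Lemma Zp_rot_isometric p : isometric_torus_action (@Zp_rot p).
Proof.
set n := (Zp_trunc p).+2; set x : R := pi / n%:R.
have xn : x * n%:R = pi by rewrite /x mulfVK // pnatr_eq0.
split=> [v | g h v | g v w]; last exact: edist_rot2.
  by rewrite /Zp_rot mxE mulr0 rot20.
rewrite /Zp_rot rot2D mxE /=; set a := val (g 0 0); set c := val (h 0 0).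
have -> : 2 * x * a%:R + 2 * x * c%:R =
    2 * x * ((a + c) %% n)%N%:R + (pi *+ 2) *+ ((a + c) %/ n).
  rewrite -mulrDr -natrD {1}(divn_eq (a + c) n) natrD natrM mulrDr addrC.
  by congr (_ + _); rewrite -mulr_natr -xn; ring.
by rewrite rot2_periodic.
Qed.

Lemma row_mx_rV0 (v : 'rV[R]_2) : row_mx v (0 : 'rV[R]_0) = v.
Proof.
apply/rowP => j; rewrite mxE; case: splitP => [j' hj|k]; last by case: k.
by congr (v _ _); apply: val_inj.
Qed.

Lemma polygon_sub_p_toral p m : (m <= (Zp_trunc p).+2)%N ->
  euclidean_sub_p_toral p
    (fun v => exists i : 'I_m, v = polygon_vertex (Zp_trunc p).+2 i).
Proof.
move=> m_le_n; exists 0%N, 1%N, (@Zp_rot p), (polygon_vertex (Zp_trunc p).+2 0).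
split=> //; first exact: Zp_rot_isometric.
move=> v [i ->]; exists (const_mx (inZp i)).
rewrite /std_incl row_mx_rV0 /Zp_rot /polygon_vertex rot2D mxE /= mulr0 addr0.
by rewrite modn_small // (leq_trans (ltn_ord i) m_le_n).
Qed.

End RegularPolygon.

Lemma ord_dist_lt (R : realDomainType) m (i j : 'I_m) :
  `|i%:R - j%:R : R| < m%:R.
Proof.
have := ltn_ord i; have := ltn_ord j; rewrite -!(ltr_nat R) => jm im.
have := ler0n R i; have := ler0n R j => j0 i0.
by rewrite ltr_norml; apply/andP; split; lra.
Qed.

Theorem lemma6 (R : realType) (eps : R) (m : nat) :
  0 < eps -> (0 < m)%N ->
  exists p0 : nat, forall p : nat, prime p -> (p0 <= p)%N ->
    exists (k : nat) (b : 'I_m -> 'rV[R]_k),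
      euclidean_sub_p_toral p (fun x => exists i, x = b i) /\
      forall i j : 'I_m,
        `| edist (b i) (b j) - `|(i%:R : R) - j%:R| | < eps.
Proof.
move=> eps_gt0 m_gt0.
have m_pos : (0 : R) < m%:R by rewrite ltr0n.
have [e e_gt0 He] := sin_chord_approx eps_gt0 m_pos.
have bound_ge0 : 0 <= m%:R * pi / e by rewrite divr_ge0 ?mulr_ge0 ?ltW ?pi_gt0.
exists (Num.bound (m%:R * pi / e) + m)%N => p p_prime p_large.
have n_eq : (Zp_trunc p).+2 = p := Zp_cast (prime_gt1 p_prime).
set n := (Zp_trunc p).+2 in n_eq *.
have n_gt0 : (0 : R) < n%:R by rewrite ltr0n.
have x_gt0 : 0 < pi / n%:R :> R by rewrite divr_gt0 ?pi_gt0.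
have bound_lt : m%:R * pi / e < n%:R.
  apply: lt_le_trans (archi_boundP bound_ge0) _.
  by rewrite ler_nat n_eq (leq_trans _ p_large) ?leq_addr.
have xm_le_e : pi / n%:R * m%:R <= e.
  rewrite ltr_pdivrMr // in bound_lt.
  by rewrite mulrAC ler_pdivrMr // mulrC [e * _]mulrC ltW.
exists 2%N, (fun i => polygon_vertex R n i); split.
  have m_le_n : (m <= n)%N by rewrite n_eq (leq_trans _ p_large) ?leq_addl.
  exact: polygon_sub_p_toral.
by move=> i j; rewrite edist_polygon_vertex // He // ord_dist_lt.
Qed.
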